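(* Let $\mathcal H$ be a complex Hilbert space and $T\in\mathcal B(\mathcal H)$ a non-invertible operator with $\|Tx\|\ge\|x\|$ for all $x$ and $\sigma_{ap}(T)\subseteq\partial\mathbb D$. Let $T'=T(T^*T)^{-1}$. Then (i) $\sigma(T)=\overline{\mathbb D}=\sigma(T')$, and (ii) $\sigma_{ap}(T)=\partial\mathbb D=\sigma_{ap}(T')$.
   Context: $\sigma_{ap}$ is the approximate point spectrum (set of $\lambda$ with $A-\lambda I$ not bounded below); $\mathbb D$ is the open unit disc. $T^*T\ge I$ is invertible so $T'$ is defined. *)

From HB Require Import structures.
From mathcomp Require Import all_boot all_order all_algebra.
From mathcomp Require Import complex.
From mathcomp Require Import reals.
Set Implicit Arguments. Unset Strict Implicit. Unset Printing Implicit Defensive.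
Import Order.TTheory GRing.Theory Num.Theory.
Local Open Scope ring_scope.
Local Open Scope complex_scope.

Section Hilbert.
Variable R : realType.
Variable V : lmodType R[i].
Variable ip : V -> V -> R[i].

Definition hnorm (x : V) : R := Num.sqrt (complex.Re (ip x x)).

(* inner product axioms (linear in the first argument) *)
Definition is_inner_product : Prop :=
  [/\ (forall (a : R[i]) (x y z : V), ip (a *: x + y) z = a * ip x z + ip y z),
      (forall x y : V, ip y x = (ip x y)^*),
      (forall x : V, 0 <= ip x x) &
      (forall x : V, ip x x = 0 -> x = 0)].

Definition hcomplete : Prop :=
  forall u : nat -> V,
    (forall e : R, 0 < e -> exists N : nat, forall m n : nat,
        (N <= m)%N -> (N <= n)%N -> hnorm (u m - u n) < e) ->
    exists l : V, forall e : R, 0 < e -> exists N : nat, forall n : nat,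
        (N <= n)%N -> hnorm (u n - l) < e.

Definition is_hilbert : Prop := is_inner_product /\ hcomplete.

Definition bounded_op (A : V -> V) : Prop :=
  (forall (a : R[i]) (x y : V), A (a *: x + y) = a *: A x + A y) /\
  exists M : R, forall x : V, hnorm (A x) <= M * hnorm x.

Definition is_adjoint (A S : V -> V) : Prop :=
  forall x y : V, ip (A x) y = ip x (S y).

Definition invertible_op (A : V -> V) : Prop :=
  exists B : V -> V, [/\ bounded_op B, cancel A B & cancel B A].

Definition shift_op (A : V -> V) (l : R[i]) : V -> V := fun x => A x - l *: x.

Definition spectrum (A : V -> V) : R[i] -> Prop :=
  fun l => ~ invertible_op (shift_op A l).

Definition bounded_below (A : V -> V) : Prop :=
  exists c : R, 0 < c /\ forall x : V, c * hnorm x <= hnorm (A x).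

Definition ap_spectrum (A : V -> V) : R[i] -> Prop :=
  fun l => ~ bounded_below (shift_op A l).

End Hilbert.

Definition closed_unit_disc (R : realType) : R[i] -> Prop := fun z => `|z| <= 1.
Definition unit_circle (R : realType) : R[i] -> Prop := fun z => `|z| = 1.

From HB Require Import structures.
From mathcomp Require Import all_boot all_order all_algebra.
From mathcomp Require Import complex reals classical_sets.
From mathcomp Require Import ring lra.
From Stdlib Require Import IndefiniteDescription Classical.
Import Order.TTheory GRing.Theory Num.Theory.
Import ComplexField.Normc.
Local Open Scope ring_scope.
Local Open Scope complex_scope.
Set Implicit Arguments. Unset Strict Implicit.

(* Off the unit circle every shift A - l of the operators considered is bounded
   below, and a surjective operator bounded below by c stays surjective under
   perturbations of norm at most c/2 (a Neumann series, using completeness).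
   Hence surjectivity of A - l is constant along any segment of such shifts.
   For |l| > 1 join l radially to a point beyond 2|A|, where A - l is onto; for
   |l| < 1 join l to 0, where A is not onto.  On the circle A - l is not
   invertible, since invertibility persists nearby while the open disc lies in
   the spectrum, and not bounded below, since it would then be onto like its
   outer neighbours.
   This applies to T, which is expansive and not invertible, hence not onto,
   and to its Cauchy dual T' = T (T^*T)^-1: T' is a contraction with T^* T' = 1
   and the same range as T, and for 0 < |mu| < 1 the operator
   T^* (T' - mu) = -mu (T^* - 1/mu) is bounded below because T^* - 1/mu is the
   adjoint of the invertible T - conj (1/mu). *)

Section Scalars.
Variable R : realType.
Implicit Types (a b : R[i]) (r : R).

Lemma le_of_sqr_le_mul (h k : R) : 0 <= k -> h ^+ 2 <= k * h -> h <= k.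
Proof. by move=> k0 hk; nra. Qed.

Lemma ReD a b : complex.Re (a + b) = complex.Re a + complex.Re b.
Proof. by case: a => ? ?; case: b. Qed.

Lemma ReJ a : complex.Re (conjc a) = complex.Re a.
Proof. by case: a. Qed.

Lemma normc_ge0 a : 0 <= normc a.
Proof. by case: a => ? ?; exact: sqrtr_ge0. Qed.

Lemma Re_le_normc a : complex.Re a <= normc a.
Proof.
case: a => r s /=; apply: le_trans (ler_norm r) _.
by rewrite -sqrtr_sqr ler_sqrt ?addr_ge0 ?sqr_ge0 // lerDl sqr_ge0.
Qed.

Lemma mulcJ_normc a : a * conjc a = (normc a ^+ 2)%:C.
Proof.
case: a => r s /=; rewrite sqr_sqrtr ?addr_ge0 ?sqr_ge0 //.
by rewrite /GRing.mul /=; congr (_ +i* _); ring.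
Qed.

Lemma normc_real r : normc r%:C = `|r|.
Proof. by rewrite /= expr0n /= addr0 sqrtr_sqr. Qed.

Lemma conjc_div_real a r : conjc (a / r%:C) = conjc a / r%:C.
Proof.
have -> : conjc a / r%:C = conjc a * conjc (r%:C^-1) by rewrite conjc_inv conjc_real.
exact: rmorphM.
Qed.

Lemma normc_conj a : normc (conjc a) = normc a.
Proof. by case: a => ? ? /=; rewrite sqrrN. Qed.

Lemma normr_normc a : `|a| = (normc a)%:C.
Proof. by case: a => r s; rewrite normc_def. Qed.

Lemma closed_unit_discE a : closed_unit_disc a <-> normc a <= 1.
Proof. by rewrite /closed_unit_disc normr_normc lecR. Qed.

Lemma unit_circleE a : unit_circle a <-> normc a = 1.
Proof. by rewrite /unit_circle normr_normc; split => [[]|->]. Qed.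

End Scalars.

Section LinearMap.
Variables (K : pzRingType) (U W : lmodType K) (f : U -> W).
Hypothesis f_lin : linear f.

Lemma linear_funD x y : f (x + y) = f x + f y.
Proof. by have := f_lin 1 x y; rewrite !scale1r. Qed.

Lemma linear_fun0 : f 0 = 0.
Proof. by apply: (@addrI _ (f 0)); rewrite -linear_funD !addr0. Qed.

Lemma linear_funZ a x : f (a *: x) = a *: f x.
Proof. by have := f_lin a x 0; rewrite !addr0 linear_fun0 addr0. Qed.

Lemma linear_funB x y : f (x - y) = f x - f y.
Proof. by rewrite linear_funD -scaleN1r linear_funZ scaleN1r. Qed.

End LinearMap.

Section SegmentConnected.
Variable R : realType.

Lemma segment_locally_constant (P : R -> Prop) :
  (forall t : R, 0 <= t <= 1 -> exists2 d : R, 0 < d &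
     forall u : R, 0 <= u <= 1 -> `|u - t| <= d -> (P u <-> P t)) ->
  P 1 -> P 0.
Proof.
move=> loc P1; apply: NNPP => nP0.
pose E (t : R) := 0 <= t <= 1 /\ ~ P t.
have E0 : E 0 by split; rewrite ?lexx ?ler01.
have supE : has_sup E by split; [exists 0 | exists 1 => t [/andP[]]].
set s := sup E.
have s01 : 0 <= s <= 1.
  by rewrite (sup_upper_bound supE E0) (ge_sup (ex_intro _ 0 E0)) // => t [/andP[]].
have /andP[s0 s1] := s01.
have [d d0 near_s] := loc s s01.
have nPs : ~ P s.
  have [e [e01 nPe]] := sup_adherent d0 supE; rewrite -/s => se.
  have es : e <= s := sup_upper_bound supE (conj e01 nPe).
  have es_near : `|e - s| <= d by rewrite ler0_norm ?subr_le0 // opprB; lra.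
  by move=> Ps; apply: nPe; apply/(near_s e e01 es_near).
have [s_near1|s_far1] := lerP (1 - s) d.
  have near1 : `|1 - s| <= d by rewrite ger0_norm // subr_ge0.
  by apply: nPs; apply/(near_s 1 _ near1).1; rewrite ?ler01 ?lexx.
have Esd : E (s + d).
  have sd01 : 0 <= s + d <= 1 by apply/andP; split; lra.
  have near_sd : `|s + d - s| <= d by rewrite addrAC subrr add0r gtr0_norm.
  by split=> // Psd; apply: nPs; apply/(near_s _ sd01 near_sd).1.
by have := sup_upper_bound supE Esd; rewrite -/s; lra.
Qed.

End SegmentConnected.

Section HilbertSpace.
Variables (R : realType) (V : lmodType R[i]) (ip : V -> V -> R[i]).
Hypothesis ip_inner : is_inner_product ip.
Local Notation nrm := (hnorm ip).
Implicit Types (a : R[i]) (x y z : V) (A B : V -> V).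

Lemma ipDl x y z : ip (x + y) z = ip x z + ip y z.
Proof. by case: ip_inner => lin _ _ _; have := lin 1 x y z; rewrite scale1r mul1r. Qed.

Lemma ip0l z : ip 0 z = 0.
Proof. by apply: (@addrI _ (ip 0 z)); rewrite -ipDl !addr0. Qed.

Lemma ipZl a x z : ip (a *: x) z = a * ip x z.
Proof. by case: ip_inner => lin _ _ _; have := lin a x 0 z; rewrite addr0 ip0l addr0. Qed.

Lemma ipBl x y z : ip (x - y) z = ip x z - ip y z.
Proof. by rewrite ipDl -scaleN1r ipZl mulN1r. Qed.

Lemma ip_conj x y : ip y x = conjc (ip x y).
Proof. by case: ip_inner. Qed.

Lemma ipDr x y z : ip z (x + y) = ip z x + ip z y.
Proof. by rewrite ip_conj ipDl rmorphD /= -!ip_conj. Qed.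

Lemma ipZr a x z : ip z (a *: x) = conjc a * ip z x.
Proof. by rewrite ip_conj ipZl rmorphM /= -ip_conj. Qed.

Lemma ipBr x y z : ip z (x - y) = ip z x - ip z y.
Proof. by rewrite ip_conj ipBl rmorphB /= -!ip_conj. Qed.

Lemma hnorm_ge0 x : 0 <= nrm x.
Proof. exact: sqrtr_ge0. Qed.

Lemma ipxx x : ip x x = (nrm x ^+ 2)%:C.
Proof.
case: ip_inner => _ _ /(_ x) + _; rewrite lecE /= => /andP[/eqP Im0 Re_ge0].
by rewrite sqr_sqrtr //; move: Im0; case: (ip x x) => ? ? /= ->.
Qed.

Lemma hnorm_sq x : nrm x ^+ 2 = complex.Re (ip x x).
Proof. by rewrite ipxx. Qed.

Lemma hnorm_eq0 x : nrm x = 0 -> x = 0.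
Proof. by case: ip_inner => _ _ _ + nx0; apply; rewrite ipxx nx0 expr0n. Qed.

Lemma hnorm0 : nrm 0 = 0.
Proof. by rewrite /hnorm ip0l sqrtr0. Qed.

Lemma hnormZ a x : nrm (a *: x) = normc a * nrm x.
Proof.
apply/eqP; rewrite -(eqrXn2 (n := 2)) ?mulr_ge0 ?normc_ge0 ?hnorm_ge0 //.
by rewrite hnorm_sq ipZl ipZr mulrA mulcJ_normc ipxx -rmorphM exprMn.
Qed.

Lemma hnormN x : nrm (- x) = nrm x.
Proof. by rewrite -scaleN1r hnormZ normcN normc1 mul1r. Qed.

Lemma hnormB x y : nrm (x - y) = nrm (y - x).
Proof. by rewrite -hnormN opprB. Qed.

Lemma cauchy_schwarz x y : normc (ip x y) <= nrm x * nrm y.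
Proof.
have [->|y0] := eqVneq y 0; first by rewrite ip_conj ip0l conjc0 hnorm0 normc0 mulr0.
have Y0 : 0 < nrm y ^+ 2.
  by rewrite exprn_gt0 // lt_def hnorm_ge0 andbT; apply: contra_neq y0 => /hnorm_eq0.
set p := ip x y; set Y := nrm y ^+ 2; set s := p / Y%:C.
have YC0 : Y%:C != 0 by rewrite eq_complex /= eqxx andbT gt_eqF.
have sJ : conjc s = conjc p / Y%:C := conjc_div_real p Y.
have : 0 <= nrm (x - s *: y) ^+ 2 by rewrite sqr_ge0.
rewrite hnorm_sq ipBl !ipBr !ipZl !ipZr !ipxx (ip_conj x y) -/p -/Y sJ.
have -> : (nrm x ^+ 2)%:C - conjc p / Y%:C * p - (s * conjc p - s * (conjc p / Y%:C * Y%:C))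
        = (nrm x ^+ 2)%:C - p * conjc p / Y%:C by rewrite /s; field.
rewrite mulcJ_normc -fmorph_div -rmorphB /= subr_ge0 ler_pdivrMr //.
by rewrite -exprMn ler_pXn2r // ?nnegrE ?mulr_ge0 ?normc_ge0 ?hnorm_ge0.
Qed.

Lemma hnormD x y : nrm (x + y) <= nrm x + nrm y.
Proof.
rewrite -(ler_pXn2r (n := 2)) ?nnegrE ?addr_ge0 ?hnorm_ge0 //.
rewrite hnorm_sq ipDl !ipDr !ReD (ip_conj x y) ReJ -!hnorm_sq.
have := Re_le_normc (ip x y); have := cauchy_schwarz x y; nra.
Qed.

Definition bounded_by A (M : R) := forall x, nrm (A x) <= M * nrm x.

Definition bounded_below_by A (c : R) := 0 < c /\ forall x, c * nrm x <= nrm (A x).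

Definition surjective A := forall y, exists x, A x = y.

Lemma hnorm_distD x y z : nrm (x - z) <= nrm (x - y) + nrm (y - z).
Proof. by have := hnormD (x - y) (y - z); rewrite addrA subrK. Qed.

Lemma hnorm_small_eq0 x : (forall e : R, 0 < e -> nrm x < e) -> x = 0.
Proof.
move=> small; apply: hnorm_eq0; apply/eqP; rewrite eq_le hnorm_ge0 andbT.
by rewrite leNgt; apply/negP => /small; rewrite ltxx.
Qed.

Lemma bounded_op_pos A : bounded_op ip A -> exists2 M, 0 < M & bounded_by A M.
Proof.
case=> _ [M AM]; exists (`|M| + 1) => [|x]; first by rewrite ltr_pwDr.
by have := AM x; have := ler_norm M; have := hnorm_ge0 x; nra.
Qed.

Lemma bounded_below_of_le A K : 0 < K -> (forall x, nrm x <= K * nrm (A x)) ->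
  bounded_below ip A.
Proof.
by move=> K0 AK; exists K^-1; split=> [|x]; rewrite ?invr_gt0 // ler_pdivrMl.
Qed.

Lemma bounded_below_comp A B : bounded_op ip B -> bounded_below ip (fun x => B (A x)) ->
  bounded_below ip A.
Proof.
move=> /bounded_op_pos[M M0 BM] [c [c0 BAc]].
apply: (bounded_below_of_le (K := M / c)) => [|x]; first by rewrite divr_gt0.
by rewrite mulrAC ler_pdivlMr // mulrC; exact: le_trans (BAc x) (BM (A x)).
Qed.

Lemma bounded_below_scale a A : a != 0 -> bounded_below ip A ->
  bounded_below ip (fun x => a *: A x).
Proof.
move=> a0 [c [c0 Ac]]; exists (normc a * c); split=> [|x].
  by rewrite mulr_gt0 // lt_def normc_ge0 andbT; apply: contra_neq a0 => /eq0_normc.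
by rewrite hnormZ -mulrA ler_wpM2l ?normc_ge0.
Qed.

Lemma shift_linear A l : linear A -> linear (shift_op A l).
Proof.
move=> A_lin a x y; rewrite /shift_op A_lin scalerDr scalerBr !scalerA [l * a]mulrC.
by rewrite opprD addrACA.
Qed.

Lemma shift_bounded_below_large A M mu : bounded_by A M -> M < normc mu ->
  bounded_below ip (shift_op A mu).
Proof.
move=> AM Mmu; exists (normc mu - M); split=> [|x]; first by rewrite subr_gt0.
have := hnorm_distD (mu *: x) (A x) 0; rewrite !subr0 hnormZ hnormB.
by have := AM x; rewrite /shift_op; lra.
Qed.

Lemma invertible_surjective A : invertible_op ip A -> surjective A.
Proof. by case=> B [_ _ BK] y; exists (B y). Qed.

Lemma invertible_bounded_below A : invertible_op ip A -> bounded_below ip A.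
Proof.
case=> B [/bounded_op_pos[M M0 BM] AK _]; apply: (bounded_below_of_le M0) => x.
by rewrite -{1}(AK x); exact: BM.
Qed.

Lemma bounded_below_surjective_invertible A : linear A -> bounded_below ip A ->
  surjective A -> invertible_op ip A.
Proof.
move=> A_lin [c [c0 Ac]] A_onto.
have A_inj x y : A x = A y -> x = y.
  move=> Axy; apply/eqP; rewrite -subr_eq0; apply/eqP/hnorm_eq0.
  have := Ac (x - y); rewrite linear_funB // Axy subrr hnorm0.
  by have := hnorm_ge0 (x - y); nra.
pose S y := proj1_sig (constructive_indefinite_description _ (A_onto y)).
have SK y : A (S y) = y := proj2_sig (constructive_indefinite_description _ (A_onto y)).
exists S; split => [|x|//]; last by apply: A_inj; rewrite SK.
split=> [a x y|]; first by apply: A_inj; rewrite A_lin !SK.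
by exists c^-1 => y; rewrite ler_pdivlMl // -{2}(SK y).
Qed.

Lemma adjoint_shift_bounded_below A S nu : is_adjoint ip A S ->
  invertible_op ip (shift_op A nu) -> bounded_below ip (shift_op S (conjc nu)).
Proof.
move=> adj [B [/bounded_op_pos[M M0 BM] _ KB]].
apply: (bounded_below_of_le M0) => x.
set w := shift_op S (conjc nu) x.
have ipxx : ip x x = ip (B x) w.
  rewrite -{1}(KB x) /w /shift_op ipBl ipZl adj.
  by rewrite ipBr ipZr conjcK.
apply: le_of_sqr_le_mul; first by rewrite mulr_ge0 ?hnorm_ge0 // ltW.
rewrite hnorm_sq ipxx; apply: le_trans (Re_le_normc _) _.
apply: le_trans (cauchy_schwarz _ _) _.
by rewrite mulrAC ler_wpM2r ?hnorm_ge0.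
Qed.

Definition cauchy_seq (u : nat -> V) := forall e : R, 0 < e -> exists N : nat,
  forall m n : nat, (N <= m)%N -> (N <= n)%N -> nrm (u m - u n) < e.

Lemma halving_cauchy (u : nat -> V) :
  (forall n, 2 * nrm (u n.+2 - u n.+1) <= nrm (u n.+1 - u n)) -> cauchy_seq u.
Proof.
move=> half; set K := nrm (u 1%N - u 0%N); have K0 : 0 <= K := hnorm_ge0 _.
have pow2_ge0 n : 0 <= (2 : R) ^+ n by rewrite exprn_ge0.
have geo n : nrm (u n.+1 - u n) * 2 ^+ n <= K.
  elim: n => [|n IH]; first by rewrite expr0 mulr1.
  rewrite exprS; have := half n; have := pow2_ge0 n.
  by have := hnorm_ge0 (u n.+2 - u n.+1); nra.
have partial n k : nrm (u (n + k)%N - u n) * 2 ^+ (n + k) <= 2 * K * (2 ^+ k - 1).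
  elim: k => [|k IH]; first by rewrite addn0 subrr hnorm0 mul0r expr0 subrr mulr0.
  rewrite addnS !exprS; have := hnorm_distD (u (n + k).+1) (u (n + k)%N) (u n).
  have := geo (n + k)%N; have := pow2_ge0 (n + k)%N.
  by have := hnorm_ge0 (u (n + k).+1 - u n); nra.
have tail n m : (n <= m)%N -> nrm (u m - u n) * 2 ^+ n <= 2 * K.
  move=> /subnKC <-; have := partial n (m - n)%N; rewrite exprD.
  have : 1 <= (2 : R) ^+ (m - n) by rewrite exprn_ege1 // ler1n.
  by have := pow2_ge0 n; have := hnorm_ge0 (u (n + (m - n))%N - u n); nra.
move=> e e0; have [N HN] : exists N : nat, 2 * K / e < N%:R.
  exists (Num.bound (2 * K / e)).
  by rewrite archi_boundP // divr_ge0 ?mulr_ge0 ?hnorm_ge0 ?ltW.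
have near n m : (N <= n)%N -> (n <= m)%N -> nrm (u m - u n) < e.
  move=> Nn nm; move: HN; rewrite ltr_pdivrMr // => HN.
  have Nn' : N%:R <= (2 : R) ^+ n.
    by apply: le_trans (_ : n%:R <= _); rewrite ?ler_nat // -natrX ler_nat ltnW // ltn_expl.
  have := tail n m nm; have := hnorm_ge0 (u m - u n); have := pow2_ge0 n; nra.
exists N => m n Nm Nn; case: (leqP n m) => [nm|/ltnW mn]; first exact: near.
by rewrite hnormB; exact: near.
Qed.

Section Complete.
Hypothesis ip_complete : hcomplete ip.

Lemma neumann_surjective K : linear K -> (forall x, 2 * nrm (K x) <= nrm x) ->
  surjective (fun x => x + K x).
Proof.
move=> K_lin K_half z.
(* the partial sums of the Neumann series sum_k (-K)^k z *)
pose u := fix u n := if n is n'.+1 then z - K (u n') else 0.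
have uS n : u n.+1 = z - K (u n) by [].
have half n : 2 * nrm (u n.+2 - u n.+1) <= nrm (u n.+1 - u n).
  by rewrite (uS n.+1) {2}(uS n) opprB addrC addrA subrK -linear_funB // hnormB; exact: K_half.
have [l ul] := ip_complete (halving_cauchy half).
exists l; apply/eqP; rewrite -subr_eq0; apply/eqP/hnorm_small_eq0 => e e0.
have [N HN] := ul (e / 2) (divr_gt0 e0 (ltr0Sn _ 1)).
rewrite [z](_ : _ = u N.+1 + K (u N)); last by rewrite uS subrK.
rewrite opprD addrACA -linear_funB //; apply: le_lt_trans (hnormD _ _) _.
have := HN N.+1 (leqnSn N); have := HN N (leqnn N); have := K_half (l - u N).
by rewrite !(hnormB l); lra.
Qed.

Lemma perturb_surjective A B c : linear A -> linear B -> bounded_below_by A c ->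
  surjective A -> (forall x, 2 * nrm (B x - A x) <= c * nrm x) -> surjective B.
Proof.
move=> A_lin B_lin [c0 Ac] A_onto BA y.
have [S [[S_lin _] _ AS]] :=
  bounded_below_surjective_invertible A_lin (ex_intro _ c (conj c0 Ac)) A_onto.
(* B = A (1 + K) with K = A^-1 (B - A) of norm at most 1/2 *)
pose K x := S (B x - A x).
have K_lin : linear K.
  by move=> a x x'; rewrite /K -S_lin A_lin B_lin scalerBr opprD addrACA.
have K_half x : 2 * nrm (K x) <= nrm x.
  rewrite -(ler_pM2l c0) mulrCA; apply: le_trans (BA x).
  by rewrite ler_wpM2l //; have := Ac (K x); rewrite /K AS.
have [x xK] := neumann_surjective K_lin K_half (S y).
by exists x; rewrite -(AS y) -xK linear_funD // AS addrC subrK.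
Qed.

Lemma shift_bounded_below_perturb A mu nu c :
  bounded_below_by (shift_op A mu) c -> normc (nu - mu) < c ->
  bounded_below_by (shift_op A nu) (c - normc (nu - mu)).
Proof.
move=> [c0 Ac] near; split=> [|x]; first by rewrite subr_gt0.
have : shift_op A mu x = shift_op A nu x + (nu - mu) *: x.
  by rewrite /shift_op scalerBl addrA subrK.
move/(congr1 nrm) => Emu; have := Ac x; rewrite Emu => /le_trans/(_ (hnormD _ _)).
by rewrite hnormZ mulrBl; lra.
Qed.

Lemma shift_surjective_perturb A mu nu c : linear A ->
  bounded_below_by (shift_op A mu) c -> surjective (shift_op A mu) ->
  2 * normc (nu - mu) <= c -> surjective (shift_op A nu).
Proof.
move=> A_lin bbc onto near; apply: (perturb_surjective _ _ bbc onto) => [||x].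
- exact: shift_linear.
- exact: shift_linear.
have -> : shift_op A nu x - shift_op A mu x = (mu - nu) *: x.
  by rewrite /shift_op opprB addrC addrA subrK scalerBl.
by rewrite hnormZ -normcN opprB mulrA ler_wpM2r ?hnorm_ge0.
Qed.

Lemma shift_surjective_near A lam mu c : linear A ->
  bounded_below_by (shift_op A lam) c -> 3 * normc (mu - lam) <= c ->
  surjective (shift_op A mu) <-> surjective (shift_op A lam).
Proof.
move=> A_lin bbc near; have c0 : 0 < c by case: bbc.
have dist_ge0 := normc_ge0 (mu - lam).
split=> [onto|]; last by move=> onto; apply: shift_surjective_perturb A_lin bbc onto _; lra.
have bb_mu := shift_bounded_below_perturb bbc (_ : normc (mu - lam) < c).
apply: (shift_surjective_perturb A_lin (bb_mu _) onto); first by lra.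
by rewrite -normcN opprB; lra.
Qed.

Lemma segment_shift_surjective A mu0 mu1 : linear A ->
  (forall t : R, 0 <= t <= 1 -> bounded_below ip (shift_op A (mu0 + t%:C * (mu1 - mu0)))) ->
  surjective (shift_op A mu1) -> surjective (shift_op A mu0).
Proof.
move=> A_lin bb_seg; pose g (t : R) := mu0 + t%:C * (mu1 - mu0).
have dist_g u t : normc (g u - g t) = `|u - t| * normc (mu1 - mu0).
  rewrite -normc_real -normcM; congr normc.
  by rewrite /g rmorphB /=; ring.
have g0 : g 0 = mu0 by rewrite /g mul0r addr0.
have g1 : g 1 = mu1 by rewrite /g mul1r addrC subrK.
rewrite -{1}g1 -g0; apply: (@segment_locally_constant R (fun t => surjective (shift_op A (g t)))).
move=> t t01; have [c bbc] := bb_seg t t01; have c0 : 0 < c by case: bbc.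
set D := normc (mu1 - mu0); have D0 : 0 <= D by exact: normc_ge0.
exists (c / (3 * (D + 1))) => [|u _ ut]; first by rewrite divr_gt0 //; lra.
apply: (shift_surjective_near A_lin bbc); rewrite dist_g -/D.
move: ut; rewrite ler_pdivlMr; last by lra.
by have := normr_ge0 (u - t); nra.
Qed.

Lemma shift_surjective_large A M mu : linear A -> bounded_by A M -> 0 <= M ->
  2 * M < normc mu -> surjective (shift_op A mu).
Proof.
move=> A_lin AM M0 Mmu; have mu_pos : 0 < normc mu by lra.
have mu0 : - mu != 0.
  by rewrite oppr_eq0; apply: contraTneq mu_pos => ->; rewrite normc0 ltxx.
apply: (@perturb_surjective (fun x => (- mu) *: x) _ (normc mu)) => [a x y||||x].
- by rewrite scalerDr !scalerA mulrC.
- exact: shift_linear.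
- by split=> // x; rewrite hnormZ normcN.
- by move=> y; exists ((- mu)^-1 *: y); rewrite scalerA mulfV // scale1r.
rewrite /shift_op scaleNr opprK subrK.
by have := AM x; have := hnorm_ge0 x; nra.
Qed.

Section UnitCircleApproximateSpectrum.
Variable A : V -> V.
Hypothesis A_bounded : bounded_op ip A.
Hypothesis A_bounded_below : forall l, normc l != 1 -> bounded_below ip (shift_op A l).

Lemma shift_surjective_outside l : 1 <= normc l -> bounded_below ip (shift_op A l) ->
  surjective (shift_op A l).
Proof.
move=> l1 bbl; have [A_lin _] := A_bounded; have [M M0 AM] := bounded_op_pos A_bounded.
have [r r_def] : exists r : R, r = 2 * M + 2 by eexists.
apply: (segment_shift_surjective A_lin (mu1 := r%:C * l)) => [t /andP[t0 t1]|].
  rewrite (_ : _ + _ = (1 + t * (r - 1))%:C * l); last by rewrite rmorphD rmorphM rmorphB /=; ring.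
  have [->|t_neq0] := eqVneq t 0; first by rewrite mul0r addr0 mul1r.
  have tr : 0 < t * (r - 1) by rewrite mulr_gt0 ?lt_def ?t_neq0 // r_def; lra.
  by apply: A_bounded_below; rewrite normcM normc_real gt_eqF // ger0_norm; nra.
apply: (shift_surjective_large A_lin AM (ltW M0)).
by rewrite normcM normc_real ger0_norm; nra.
Qed.

Hypothesis A_not_surjective : ~ surjective A.

Lemma shift_not_surjective_inside l : normc l < 1 -> ~ surjective (shift_op A l).
Proof.
move=> l1 onto_l; have [A_lin _] := A_bounded; apply: A_not_surjective => y.
have onto0 : surjective (shift_op A 0).
  apply: (segment_shift_surjective A_lin _ onto_l) => t /andP[t0 t1].
  apply: A_bounded_below; rewrite add0r subr0 normcM normc_real ger0_norm // lt_eqF //.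
  by have := normc_ge0 l; nra.
by have [x <-] := onto0 y; exists x; rewrite /shift_op scale0r subr0.
Qed.

Lemma shift_not_invertible_circle l : normc l = 1 -> ~ invertible_op ip (shift_op A l).
Proof.
move=> l1 inv; have [A_lin _] := A_bounded.
have [c [c0 Ac]] := invertible_bounded_below inv.
set e := c / (2 * c + 2).
have e0 : 0 < e by rewrite divr_gt0 //; lra.
have e1 : e < 1 by rewrite ltr_pdivrMr; lra.
have ec : 2 * e <= c by rewrite mulrA ler_pdivrMr; nra.
apply: (shift_not_surjective_inside (l := (1 - e)%:C * l)).
  by rewrite normcM normc_real l1 mulr1 ger0_norm; lra.
apply: (shift_surjective_perturb A_lin (conj c0 Ac) (invertible_surjective inv)).
rewrite (_ : _ - l = (- e)%:C * l); last by rewrite rmorphB rmorphN /=; ring.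
by rewrite normcM normc_real l1 mulr1 normrN gtr0_norm.
Qed.

Lemma shift_not_bounded_below_circle l : normc l = 1 -> ~ bounded_below ip (shift_op A l).
Proof.
move=> l1 bbl; apply: (shift_not_invertible_circle l1).
apply: (bounded_below_surjective_invertible (shift_linear _ A_bounded.1) bbl).
by apply: shift_surjective_outside; rewrite ?l1.
Qed.

Theorem spectra_of_nonsurjective :
  (forall l, spectrum ip A l <-> closed_unit_disc l) /\
  (forall l, ap_spectrum ip A l <-> unit_circle l).
Proof.
have [A_lin _] := A_bounded.
split=> l; rewrite ?closed_unit_discE ?unit_circleE; split.
- move=> not_inv; rewrite leNgt; apply/negP => l1; apply: not_inv.
  have bbl : bounded_below ip (shift_op A l) by apply: A_bounded_below; rewrite gt_eqF.
  apply: (bounded_below_surjective_invertible (shift_linear _ A_lin) bbl).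
  exact: shift_surjective_outside (ltW l1) bbl.
- rewrite le_eqVlt => /orP[/eqP l1|l1]; first exact: shift_not_invertible_circle.
  by move/invertible_surjective; exact: shift_not_surjective_inside.
- by move=> not_bb; apply: NNPP => /eqP l1; exact/not_bb/A_bounded_below.
- exact: shift_not_bounded_below_circle.
Qed.

End UnitCircleApproximateSpectrum.

End Complete.
Lemma eq_bounded_below A B : A =1 B -> bounded_below ip A -> bounded_below ip B.
Proof. by move=> AB [c [c0 Ac]]; exists c; split=> // x; rewrite -AB. Qed.

Section CauchyDual.
Variables T Tstar Q : V -> V.
Hypothesis T_bounded : bounded_op ip T.
Hypothesis Tstar_bounded : bounded_op ip Tstar.
Hypothesis T_adjoint : is_adjoint ip T Tstar.
Hypothesis Q_linear : linear Q.
Hypothesis TstarTQ : cancel Q (fun x => Tstar (T x)).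
Hypothesis T_expansive : forall x, nrm x <= nrm (T x).
Hypothesis T_shift_invertible : forall nu, 1 < normc nu -> invertible_op ip (shift_op T nu).

(* [Q] stands for [(T^* T)^-1]; only [T^* T Q = 1] is needed. *)
Local Notation T' := (fun x => T (Q x)).

Lemma cauchy_dual_contraction : bounded_by T' 1.
Proof.
move=> x; rewrite mul1r; apply: le_of_sqr_le_mul; first exact: hnorm_ge0.
rewrite hnorm_sq T_adjoint TstarTQ; apply: le_trans (Re_le_normc _) _.
apply: le_trans (cauchy_schwarz _ _) _.
by rewrite mulrC ler_wpM2l ?hnorm_ge0.
Qed.

Lemma cauchy_dual_bounded : bounded_op ip T'.
Proof.
split=> [a x y|]; last by exists 1; exact: cauchy_dual_contraction.
by rewrite Q_linear (proj1 T_bounded).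
Qed.

Lemma id_sub_Tstar_bounded_below mu : normc mu < 1 ->
  bounded_below ip (fun x => x - mu *: Tstar x).
Proof.
move=> mu1; have [->|mu0] := eqVneq mu 0.
  by exists 1; split=> // x; rewrite scale0r subr0 mul1r.
have mu_pos : 0 < normc mu by rewrite lt_def normc_ge0 andbT; apply: contra_neq mu0 => /eq0_normc.
have nu1 : 1 < normc (conjc mu^-1) by rewrite normc_conj normcV invf_gt1.
have := adjoint_shift_bounded_below T_adjoint (T_shift_invertible nu1).
rewrite conjcK => /(bounded_below_scale (_ : - mu != 0)); rewrite oppr_eq0 => /(_ mu0).
apply: eq_bounded_below => x.
by rewrite /shift_op scalerBr scalerA mulNr mulfV // scaleN1r opprK scaleNr addrC.
Qed.

Lemma cauchy_dual_shift_bounded_below mu : normc mu != 1 ->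
  bounded_below ip (shift_op T' mu).
Proof.
have [mu1|mu1|//] := ltrgtP (normc mu) 1.
- move=> _; apply: (bounded_below_comp Tstar_bounded).
  apply: eq_bounded_below (id_sub_Tstar_bounded_below mu1) => x.
  have Tstar_lin : linear Tstar := proj1 Tstar_bounded.
  by rewrite /shift_op (linear_funB Tstar_lin) (linear_funZ Tstar_lin) TstarTQ.
- by move=> _; exact: shift_bounded_below_large cauchy_dual_contraction mu1.
Qed.

End CauchyDual.

End HilbertSpace.

Theorem corollary4p7 (R : realType) (V : lmodType R[i]) (ip : V -> V -> R[i])
  (HH : is_hilbert ip)
  (T : V -> V) (HT : bounded_op ip T)
  (Tstar : V -> V) (HTstar : bounded_op ip Tstar) (Hadj : is_adjoint ip T Tstar)
  (Q : V -> V) (HQ : bounded_op ip Q)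
  (HQl : cancel (fun x => Tstar (T x)) Q) (HQr : cancel Q (fun x => Tstar (T x)))
  (Hninv : ~ invertible_op ip T)
  (Hexp : forall x : V, hnorm ip x <= hnorm ip (T x))
  (Hap : forall l : R[i], ap_spectrum ip T l -> unit_circle l) :
  let T' := fun x => T (Q x) in
  ((forall l : R[i], spectrum ip T l <-> closed_unit_disc l) /\
   (forall l : R[i], spectrum ip T' l <-> closed_unit_disc l)) /\
  ((forall l : R[i], ap_spectrum ip T l <-> unit_circle l) /\
   (forall l : R[i], ap_spectrum ip T' l <-> unit_circle l)).
Proof.
move=> T'; case: HH => ip_inner ip_complete.
have T_not_surjective : ~ surjective T.
  move=> onto; apply/Hninv/(bounded_below_surjective_invertible ip_inner HT.1) => //.
  by exists 1; split=> // x; rewrite mul1r.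
have T_bounded_below l : normc l != 1 -> bounded_below ip (shift_op T l).
  by move=> l1; apply: NNPP => /Hap/unit_circleE/eqP; apply/negP.
have [specT apT] :=
  spectra_of_nonsurjective ip_inner ip_complete HT T_bounded_below T_not_surjective.
have T_shift_invertible nu : 1 < normc nu -> invertible_op ip (shift_op T nu).
  by move=> nu1; apply: NNPP => /specT/closed_unit_discE; lra.
have T'_not_surjective : ~ surjective T'.
  by move=> onto; apply: T_not_surjective => y; have [x <-] := onto y; exists (Q x).
have [specT' apT'] := spectra_of_nonsurjective ip_inner ip_complete
  (cauchy_dual_bounded ip_inner HT Hadj HQ.1 HQr Hexp)
  (cauchy_dual_shift_bounded_below ip_inner HTstar Hadj HQr Hexp T_shift_invertible)
  T'_not_surjective.
by [].
Qed.
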